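(* For every set of formulas $\Gamma$ and every formula $\varphi$: $\Gamma\vdash_{\mathsf{B}^{\Box}}\varphi$ if and only if $\Gamma\models^{l}_{\mathsf{B}^{\Box}}\varphi$.
   Context: Formulas are built from a countably infinite set of propositional variables and the constants $0,1$ using the unary connectives $\neg$, $J_2$, $\Box$ and the binary connective $\vee$. Abbreviations: $\varphi\wedge\psi:=\neg(\neg\varphi\vee\neg\psi)$, $\varphi\to\psi:=\neg\varphi\vee\psi$, $\varphi\leftrightarrow\psi:=(\varphi\to\psi)\wedge(\psi\to\varphi)$, $J_0\varphi:=J_2\neg\varphi$, $J_1\varphi:=\neg(J_2\varphi\vee J_2\neg\varphi)$, $+\varphi:=\neg J_1\varphi$, $\varphi\equiv\psi:=(J_2\varphi\leftrightarrow J_2\psi)\wedge(J_0\varphi\leftrightarrow J_0\psi)$. Syntax: $\vdash_{\mathsf{B}^{\Box}}$ is given by the Hilbert calculus whose axioms are all instances of: $\varphi\vee\varphi\equiv\varphi$; $\varphi\vee\psi\equiv\psi\vee\varphi$; $(\varphi\vee\psi)\vee\chi\equiv\varphi\vee(\psi\vee\chi)$; $\varphi\vee0\equiv\varphi$; $\neg\neg\varphi\equiv\varphi$; $\neg(\varphi\vee\psi)\equiv\neg\varphi\wedge\neg\psi$; $\neg1\equiv0$; $\varphi\wedge(\psi\vee\chi)\equiv(\varphi\wedge\psi)\vee(\varphi\wedge\chi)$; $J_0J_2\varphi\leftrightarrow\neg J_2\varphi$; $J_2\varphi\leftrightarrow\neg(J_0\varphi\vee J_1\varphi)$; $(J_2\varphi\vee\neg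 J_2\varphi)\leftrightarrow1$; $J_2(\varphi\vee\psi)\leftrightarrow(J_2\varphi\wedge J_2\psi)\vee(J_2\varphi\wedge J_0\psi)\vee(J_0\varphi\wedge J_2\psi)$; $\Box(J_2\varphi\to J_2\psi)\to(\Box J_2\varphi\to\Box J_2\psi)$; $+\varphi\leftrightarrow+\Box\varphi$; $J_2\Box\varphi\to\Box J_2\varphi$; $J_0\Box\varphi\to\neg\Box J_0\neg\varphi$; rules: from $J_2\varphi\leftrightarrow J_2\psi$ and $J_0\varphi\leftrightarrow J_0\psi$ infer $\varphi\equiv\psi$; from $\varphi$ infer $J_2\varphi\leftrightarrow1$; from $J_2\varphi\leftrightarrow1$ infer $\varphi$; necessitation: if $\vdash\varphi$ then $\vdash\Box\varphi$ (only for theorems). Semantics: let $\mathbf{WK}^e$ be the algebra on $\{0,\tfrac12,1\}$ with $\neg0=1$, $\neg1=0$, $\neg\tfrac12=\tfrac12$; $a\vee b=\tfrac12$ if $a=\tfrac12$ or $b=\tfrac12$, otherwise $a\vee b=\max(a,b)$; $J_2(1)=1$, $J_2(\tfrac12)=J_2(0)=0$. A Bochvar-Kripke model is a triple $(W,R,v)$ with $W\neq\emptyset$, $R\subseteq W\times W$, $v:W\times\mathrm{Fm}\to\{0,\tfrac12,1\}$ such that for each $w$, $v(w,\cdot)$ commutes with $\neg,\vee,J_2,0,1$ as computed in $\mathbf{WK}^e$, and: $v(w,\Box\varphi)=\tfrac12$ iff $v(w,\varphi)=\tfrac12$; $v(w,\Box\varphi)=1$ iff $v(w,\varphi)\neq\tfrac12$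 and $v(s,\varphi)=1$ for all $s$ with $wRs$; $v(w,\Box\varphi)=0$ iff $v(w,\varphi)\neq\tfrac12$ and $v(s,\varphi)\neq1$ for some $s$ with $wRs$. Local consequence: $\Gamma\models^l_{\mathsf{B}^{\Box}}\varphi$ iff for every Bochvar-Kripke model $(W,R,v)$ and every $w\in W$, if $v(w,\gamma)=1$ for all $\gamma\in\Gamma$ then $v(w,\varphi)=1$.
   Formalization: The calculus $\vdash_{\mathsf{B}^{\Box}}$ also has modus ponens and, as axioms, all classical tautologies in ¬, ∨, 0, 1 whose atoms are formulas $J_2\psi$ or $\Box\chi$ with χ built from 0, 1 and such formulas by ¬, ∨, □. The paper assumes this as well. *)

From Stdlib Require Import Bool.

Inductive form : Type :=
| Var : nat -> form
| Bot : form
| Top : form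
| Neg : form -> form
| J2  : form -> form
| Box : form -> form
| Or  : form -> form -> form.

Definition And (a b : form) : form := Neg (Or (Neg a) (Neg b)).
Definition Imp (a b : form) : form := Or (Neg a) b.
Definition Iff (a b : form) : form := And (Imp a b) (Imp b a).
Definition J0 (a : form) : form := J2 (Neg a).
Definition J1 (a : form) : form := Neg (Or (J2 a) (J2 (Neg a))).
Definition Plus (a : form) : form := Neg (J1 a).
Definition Equiv (a b : form) : form :=
  And (Iff (J2 a) (J2 b)) (Iff (J0 a) (J0 b)).

Fixpoint ext (a : form) : bool :=
  match a with
  | Var _ => false
  | Bot | Top | J2 _ => true
  | Neg b | Box b => ext b
  | Or b c => ext b && ext c
  end.

Fixpoint ceval (f : form -> bool) (a : form) : bool :=
  match a with
  | Bot => false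
  | Top => true
  | Neg b => negb (ceval f b)
  | Or b c => ceval f b || ceval f c
  | _ => f a
  end.

(* Instances of classical tautologies whose atoms are external formulas. *)
Definition ext_taut (a : form) : Prop :=
  ext a = true /\ forall f : form -> bool, ceval f a = true.

Inductive axiom : form -> Prop :=
| ax_idem a       : axiom (Equiv (Or a a) a)
| ax_comm a b     : axiom (Equiv (Or a b) (Or b a))
| ax_assoc a b c  : axiom (Equiv (Or (Or a b) c) (Or a (Or b c)))
| ax_zero a       : axiom (Equiv (Or a Bot) a)
| ax_dneg a       : axiom (Equiv (Neg (Neg a)) a)
| ax_demorgan a b : axiom (Equiv (Neg (Or a b)) (And (Neg a) (Neg b)))
| ax_neg1         : axiom (Equiv (Neg Top) Bot)
| ax_distr a b c  : axiom (Equiv (And a (Or b c)) (Or (And a b) (And a c)))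
| ax_J0J2 a       : axiom (Iff (J0 (J2 a)) (Neg (J2 a)))
| ax_J2 a         : axiom (Iff (J2 a) (Neg (Or (J0 a) (J1 a))))
| ax_lem a        : axiom (Iff (Or (J2 a) (Neg (J2 a))) Top)
| ax_J2or a b     : axiom (Iff (J2 (Or a b))
                             (Or (Or (And (J2 a) (J2 b)) (And (J2 a) (J0 b)))
                                 (And (J0 a) (J2 b))))
| ax_K a b        : axiom (Imp (Box (Imp (J2 a) (J2 b)))
                               (Imp (Box (J2 a)) (Box (J2 b))))
| ax_plusbox a    : axiom (Iff (Plus a) (Plus (Box a)))
| ax_J2box a      : axiom (Imp (J2 (Box a)) (Box (J2 a)))
| ax_J0box a      : axiom (Imp (J0 (Box a)) (Neg (Box (J0 (Neg a)))))
| ax_taut a       : ext_taut a -> axiom a.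

Inductive derivable : (form -> Prop) -> form -> Prop :=
| d_hyp (G : form -> Prop) a : G a -> derivable G a
| d_ax G a : axiom a -> derivable G a
| d_mp G a b : derivable G a -> derivable G (Imp a b) -> derivable G b
| d_equiv G a b :
    derivable G (Iff (J2 a) (J2 b)) -> derivable G (Iff (J0 a) (J0 b)) ->
    derivable G (Equiv a b)
| d_J2intro G a : derivable G a -> derivable G (Iff (J2 a) Top)
| d_J2elim G a : derivable G (Iff (J2 a) Top) -> derivable G a
| d_nec G a : derivable (fun _ => False) a -> derivable G (Box a).

Inductive wk : Type := W0 | Wh | W1.

Definition wneg (x : wk) : wk :=
  match x with W0 => W1 | Wh => Wh | W1 => W0 end.
Definition wor (x y : wk) : wk :=
  match x, y with
  | Wh, _ | _, Wh => Wh
  | W1, _ | _, W1 => W1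
  | W0, W0 => W0
  end.
Definition wJ2 (x : wk) : wk := match x with W1 => W1 | _ => W0 end.

Record BKmodel : Type := {
  W : Type;
  W_nonempty : inhabited W;
  R : W -> W -> Prop;
  v : W -> form -> wk;
  v_bot : forall w, v w Bot = W0;
  v_top : forall w, v w Top = W1;
  v_neg : forall w a, v w (Neg a) = wneg (v w a);
  v_or  : forall w a b, v w (Or a b) = wor (v w a) (v w b);
  v_J2  : forall w a, v w (J2 a) = wJ2 (v w a);
  v_box_h : forall w a, v w (Box a) = Wh <-> v w a = Wh;
  v_box_1 : forall w a, v w (Box a) = W1 <->
              (v w a <> Wh /\ forall s, R w s -> v s a = W1);
  v_box_0 : forall w a, v w (Box a) = W0 <->
              (v w a <> Wh /\ exists s, R w s /\ v s a <> W1)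
}.

Definition local_conseq (G : form -> Prop) (a : form) : Prop :=
  forall (M : BKmodel) (w : W M),
    (forall g, G g -> v M w g = W1) -> v M w a = W1.

From Stdlib Require Import List Classical ClassicalEpsilon Lia Cantor.
Import ListNotations.

(* Soundness is a check of every axiom and rule in an arbitrary Bochvar-Kripke
   model; the instances of [ax_taut] hold because external formulas only take
   the values 0 and 1, on which the connectives compute classically.

   Completeness goes through a canonical model. Its worlds are the maximal
   theories G: deductively closed, not containing 0, and containing J2 a or
   ~J2 a for every a. The world G gives a the value 1 if J2 a is in G, 0 if
   J0 a is in G and 1/2 otherwise, and G sees D when J2 a is in D whenever
   Box (J2 a) is in G. The engine is the deduction theorem in the form
   "T, e |- b implies T |- e -> J2 b" for external e: it gives Lindenbaum's
   lemma and the existence lemma for Box, after which the clauses of a model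
   reduce to the axioms relating J2, J0 and Box. *)

(** * Soundness *)

Ltac vsimp :=
  repeat (rewrite v_neg || rewrite v_or || rewrite v_J2 || rewrite v_top || rewrite v_bot).

Section Soundness.
Variable M : BKmodel.

Definition is_one (x : wk) : bool := match x with W1 => true | _ => false end.

Lemma v_ext w e : ext e = true ->
  v M w e = if ceval (fun x => is_one (v M w x)) e then W1 else W0.
Proof.
  induction e as [n| | |a IH|a|a IH|a IHa b IHb]; intros He; simpl in *; try discriminate.
  - apply v_bot.
  - apply v_top.
  - rewrite v_neg, IH by exact He. destruct (ceval _ a); reflexivity.
  - rewrite v_J2. destruct (v M w a); reflexivity.
  - assert (Hd : v M w (Box a) <> Wh).
    { rewrite v_box_h, IH by exact He. destruct (ceval _ a); discriminate. }
    destruct (v M w (Box a)); simpl; congruence.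
  - apply andb_prop in He as [Ha Hb].
    rewrite v_or, IHa, IHb by assumption.
    destruct (ceval _ a), (ceval _ b); reflexivity.
Qed.

Lemma v_ext_W0_W1 w e : ext e = true -> v M w e = W0 \/ v M w e = W1.
Proof. intros He. rewrite v_ext by exact He. destruct (ceval _ e); auto. Qed.

Lemma v_J2_one w a : v M w (J2 a) = W1 <-> v M w a = W1.
Proof. rewrite v_J2. destruct (v M w a); simpl; split; congruence. Qed.

Lemma v_neg_ext w x : ext x = true -> (v M w (Neg x) = W1 <-> v M w x <> W1).
Proof.
  intros Hx. rewrite v_neg.
  destruct (v_ext_W0_W1 w x Hx) as [E|E]; rewrite E; simpl; split; congruence.
Qed.

Lemma v_imp_ext w x y : ext x = true -> ext y = true ->
  (v M w (Imp x y) = W1 <-> (v M w x = W1 -> v M w y = W1)).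
Proof.
  intros Hx Hy. unfold Imp. rewrite v_or, v_neg.
  destruct (v_ext_W0_W1 w x Hx) as [Ex|Ex], (v_ext_W0_W1 w y Hy) as [Ey|Ey];
    rewrite Ex, Ey; simpl; intuition congruence.
Qed.

Lemma v_iff_ext w x y : ext x = true -> ext y = true ->
  (v M w (Iff x y) = W1 <-> (v M w x = W1 <-> v M w y = W1)).
Proof.
  intros Hx Hy. unfold Iff, And, Imp. vsimp.
  destruct (v_ext_W0_W1 w x Hx) as [Ex|Ex], (v_ext_W0_W1 w y Hy) as [Ey|Ey];
    rewrite Ex, Ey; simpl; intuition congruence.
Qed.

Lemma v_plus_one w a : v M w (Plus a) = W1 <-> v M w a <> Wh.
Proof.
  unfold Plus, J1, J0. vsimp.
  destruct (v M w a); simpl; intuition congruence.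
Qed.

Lemma v_box_ext w x : ext x = true ->
  (v M w (Box x) = W1 <-> forall s, R M w s -> v M s x = W1).
Proof.
  intros Hx. rewrite v_box_1.
  destruct (v_ext_W0_W1 w x Hx) as [E|E]; rewrite E; intuition discriminate.
Qed.

Lemma valid_K w a b :
  v M w (Imp (Box (Imp (J2 a) (J2 b))) (Imp (Box (J2 a)) (Box (J2 b)))) = W1.
Proof.
  rewrite !v_imp_ext, !v_box_ext by reflexivity.
  intros Hab Ha s Rs. specialize (Hab s Rs).
  rewrite v_imp_ext in Hab by reflexivity. auto.
Qed.

Lemma valid_plusbox w a : v M w (Iff (Plus a) (Plus (Box a))) = W1.
Proof.
  rewrite v_iff_ext, !v_plus_one by reflexivity.
  pose proof (v_box_h M w a). tauto.
Qed.

Lemma valid_J2box w a : v M w (Imp (J2 (Box a)) (Box (J2 a))) = W1.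
Proof.
  rewrite v_imp_ext, v_box_ext, v_J2_one by reflexivity.
  intros H s Rs. rewrite v_J2_one. apply v_box_1 in H. apply H, Rs.
Qed.

Lemma valid_J0box w a : v M w (Imp (J0 (Box a)) (Neg (Box (J0 (Neg a))))) = W1.
Proof.
  rewrite v_imp_ext, v_neg_ext, v_box_ext by reflexivity.
  unfold J0. rewrite v_J2_one, v_neg. intros H Hall.
  destruct (v M w (Box a)) eqn:E; try discriminate.
  apply v_box_0 in E as [_ [s [Rs Hs]]].
  specialize (Hall s Rs). rewrite v_J2_one, !v_neg in Hall.
  destruct (v M s a); simpl in *; congruence.
Qed.

Lemma axiom_valid a w : axiom a -> v M w a = W1.
Proof.
  intros Ha. destruct Ha as [| | | | | | | | | | | | | | | | a [He Hc]].
  all: try (cbv beta delta [And Imp Iff J0 J1 Plus Equiv];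
            vsimp;
            repeat match goal with |- context [v M ?w ?x] => destruct (v M w x) end;
            reflexivity).
  - apply valid_K.
  - apply valid_plusbox.
  - apply valid_J2box.
  - apply valid_J0box.
  - rewrite v_ext, Hc by exact He. reflexivity.
Qed.

End Soundness.

Lemma soundness T a : derivable T a -> local_conseq T a.
Proof.
  induction 1 as [T a Ha|T a Ha|T a b _ IHa _ IHab|T a b _ IH2 _ IH0
                 |T a _ IH|T a _ IH|T a _ IH];
    intros M w HT.
  - apply HT, Ha.
  - apply axiom_valid, Ha.
  - specialize (IHa M w HT). specialize (IHab M w HT).
    unfold Imp in IHab. rewrite v_or, v_neg, IHa in IHab.
    destruct (v M w b); simpl in *; congruence.
  - specialize (IH2 M w HT). specialize (IH0 M w HT). revert IH2 IH0.
    cbv beta delta [And Imp Iff J0 Equiv]. vsimp. intros H2 H0.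
    destruct (v M w a), (v M w b); simpl in *; congruence.
  - specialize (IH M w HT). unfold Iff, And, Imp.
    vsimp. rewrite IH. reflexivity.
  - specialize (IH M w HT). revert IH. unfold Iff, And, Imp.
    vsimp. intros H. destruct (v M w a); simpl in *; congruence.
  - assert (Ha : forall s, v M s a = W1) by (intros s; apply (IH M s); intros _ []).
    apply v_box_1. split; [rewrite Ha; discriminate | intros s _; apply Ha].
Qed.

(** * Deduction theorem and Lindenbaum's lemma *)

Definition provable (a : form) : Prop := derivable (fun _ => False) a.

Definition add (T : form -> Prop) (e : form) : form -> Prop := fun y => T y \/ y = e.

Fixpoint imps (l : list form) (e : form) : form :=
  match l with [] => e | x :: l' => Imp x (imps l' e) end.

Lemma derivable_cut T T' b :
  (forall a, T a -> derivable T' a) -> derivable T b -> derivable T' b.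
Proof.
  intros HT H. revert T' HT.
  induction H; intros T' HT.
  - apply HT; assumption.
  - apply d_ax; assumption.
  - eapply d_mp; eauto.
  - apply d_equiv; auto.
  - apply d_J2intro; auto.
  - apply d_J2elim; auto.
  - apply d_nec; assumption.
Qed.

Lemma derivable_mono T T' b : (forall a, T a -> T' a) -> derivable T b -> derivable T' b.
Proof. intros HT. apply derivable_cut. intros a Ha. apply d_hyp, HT, Ha. Qed.

Lemma derivable_provable T a : provable a -> derivable T a.
Proof. apply derivable_mono. intros _ []. Qed.

Lemma derivable_taut T l e :
  ext_taut (imps l e) -> Forall (derivable T) l -> derivable T e.
Proof.
  intros Ht Hl. assert (H : derivable T (imps l e)) by (apply d_ax, ax_taut, Ht). clear Ht.
  induction Hl as [|x l Hx _ IH]; [exact H|].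
  apply IH. eapply d_mp; [exact Hx | exact H].
Qed.

Lemma ext_imps l e :
  Forall (fun y => ext y = true) l -> ext e = true -> ext (imps l e) = true.
Proof.
  intros Hl He. induction Hl as [|x l Hx _ IH]; simpl; [exact He|].
  rewrite Hx, IH. reflexivity.
Qed.

Ltac taut_solve :=
  split;
  [ cbv beta delta [And Imp Iff J0 J1 Plus Equiv]; simpl;
    repeat match goal with H : ext ?x = true |- _ => rewrite H end;
    reflexivity
  | let f := fresh "f" in intro f;
    cbv beta delta [And Imp Iff J0 J1 Plus Equiv]; simpl;
    repeat match goal with
      | |- context [f ?x] => destruct (f x)
      | |- context [ceval f ?x] => destruct (ceval f x)
      end; reflexivity ].

Ltac forall_list := repeat apply Forall_cons; try apply Forall_nil.

Ltac by_taut l := apply (derivable_taut _ l); [taut_solve | forall_list].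

Section Derived.
Variable T : form -> Prop.

Lemma derivable_J2 a : derivable T a -> derivable T (J2 a).
Proof. intros H. by_taut [Iff (J2 a) Top]. apply d_J2intro, H. Qed.

Lemma derivable_J2_inv a : derivable T (J2 a) -> derivable T a.
Proof. intros H. apply d_J2elim. by_taut [J2 a]. exact H. Qed.

Lemma der_J2_dneg a : derivable T (Iff (J2 (Neg (Neg a))) (J2 a)).
Proof. by_taut [Equiv (Neg (Neg a)) a]. apply d_ax, ax_dneg. Qed.

Lemma der_J2_J0_excl a : derivable T (Neg (And (J2 a) (J0 a))).
Proof. by_taut [Iff (J2 a) (Neg (Or (J0 a) (J1 a)))]. apply d_ax, ax_J2. Qed.

Lemma der_J2_Top : derivable T (J2 Top).
Proof. apply derivable_J2, d_ax, ax_taut. taut_solve. Qed.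

Lemma der_not_J2_Bot : derivable T (Neg (J2 Bot)).
Proof.
  by_taut [Equiv (Neg Top) Bot; Neg (And (J2 Top) (J0 Top)); J2 Top].
  - apply d_ax, ax_neg1.
  - apply der_J2_J0_excl.
  - apply der_J2_Top.
Qed.

(* [J2 (e \/ ~e)] is provable and splits by [ax_J2or]. *)
Lemma der_ext_defined e : ext e = true -> derivable T (Or (J2 e) (J0 e)).
Proof.
  intros He.
  by_taut [J2 (Or e (Neg e));
    Iff (J2 (Or e (Neg e)))
        (Or (Or (And (J2 e) (J2 (Neg e))) (And (J2 e) (J0 (Neg e))))
            (And (J0 e) (J2 (Neg e))))].
  - apply derivable_J2, d_ax, ax_taut. taut_solve.
  - apply d_ax, ax_J2or.
Qed.

Lemma der_J2_J2 a : derivable T (Iff (J2 (J2 a)) (J2 a)).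
Proof.
  by_taut [Or (J2 (J2 a)) (J0 (J2 a)); Iff (J0 (J2 a)) (Neg (J2 a));
           Neg (And (J2 (J2 a)) (J0 (J2 a)))].
  - apply der_ext_defined. reflexivity.
  - apply d_ax, ax_J0J2.
  - apply der_J2_J0_excl.
Qed.

Lemma der_J2_ext e : ext e = true -> derivable T (Imp (J2 e) e).
Proof.
  intros He. apply derivable_J2_inv.
  by_taut [Iff (J2 (Imp (J2 e) e))
        (Or (Or (And (J2 (Neg (J2 e))) (J2 e)) (And (J2 (Neg (J2 e))) (J0 e)))
            (And (J0 (Neg (J2 e))) (J2 e)));
    Iff (J0 (J2 e)) (Neg (J2 e));
    Iff (J2 (Neg (Neg (J2 e)))) (J2 (J2 e));
    Iff (J2 (J2 e)) (J2 e);
    Or (J2 e) (J0 e);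
    Neg (And (J2 e) (J0 e))].
  - apply d_ax, ax_J2or.
  - apply d_ax, ax_J0J2.
  - apply der_J2_dneg.
  - apply der_J2_J2.
  - apply der_ext_defined, He.
  - apply der_J2_J0_excl.
Qed.

Lemma der_ext_J2 e : ext e = true -> derivable T (Imp e (J2 e)).
Proof.
  intros He. by_taut [Or (J2 e) (J0 e); Imp (J2 (Neg e)) (Neg e)].
  - apply der_ext_defined, He.
  - apply der_J2_ext. exact He.
Qed.

Lemma der_J2_mp a b : derivable T (Imp (J2 a) (Imp (J2 (Imp a b)) (J2 b))).
Proof.
  by_taut [Iff (J2 (Imp a b))
        (Or (Or (And (J2 (Neg a)) (J2 b)) (And (J2 (Neg a)) (J0 b)))
            (And (J0 (Neg a)) (J2 b)));
     Neg (And (J2 a) (J0 a))].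
  - apply d_ax, ax_J2or.
  - apply der_J2_J0_excl.
Qed.

Lemma der_Box_J2_mono p q :
  provable (Imp (J2 p) (J2 q)) -> derivable T (Imp (Box (J2 p)) (Box (J2 q))).
Proof. intros H. eapply d_mp; [apply d_nec, H | apply d_ax, ax_K]. Qed.

End Derived.

Lemma deduction T e b :
  ext e = true -> derivable (add T e) b -> derivable T (Imp e (J2 b)).
Proof.
  intros He H. remember (add T e) as Te eqn:ETe.
  induction H as [Te a Ha|Te a Ha|Te a b _ IHa _ IHab|Te a b _ IH2 _ IH0
                 |Te a _ IH|Te a _ IH|Te a Ha]; subst Te.
  - destruct Ha as [Ha| ->].
    + by_taut [J2 a]. apply derivable_J2, d_hyp, Ha.
    + apply der_ext_J2, He.
  - by_taut [J2 a]. apply derivable_J2, d_ax, Ha.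
  - by_taut [Imp e (J2 a); Imp e (J2 (Imp a b)); Imp (J2 a) (Imp (J2 (Imp a b)) (J2 b))];
      auto using der_J2_mp.
  - by_taut [Imp e (J2 (Iff (J2 a) (J2 b))); Imp e (J2 (Iff (J0 a) (J0 b)));
             Imp (J2 (Iff (J2 a) (J2 b))) (Iff (J2 a) (J2 b));
             Imp (J2 (Iff (J0 a) (J0 b))) (Iff (J0 a) (J0 b));
             Imp (Equiv a b) (J2 (Equiv a b))];
      auto using der_J2_ext, der_ext_J2.
  - by_taut [Imp e (J2 a); Imp (Iff (J2 a) Top) (J2 (Iff (J2 a) Top))];
      auto using der_ext_J2.
  - by_taut [Imp e (J2 (Iff (J2 a) Top)); Imp (J2 (Iff (J2 a) Top)) (Iff (J2 a) Top)];
      auto using der_J2_ext.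
  - by_taut [J2 (Box a)]. apply derivable_J2, d_nec, Ha.
Qed.

Lemma deduction_list l T b :
  Forall (fun y => ext y = true) l ->
  derivable (fun y => T y \/ In y l) b -> derivable T (imps l (J2 b)).
Proof.
  intros Hl. revert T. induction Hl as [|e l He Hl IH]; intros T Hb; simpl.
  - apply derivable_J2. revert Hb. apply derivable_mono. intros y [Hy|[]]. exact Hy.
  - assert (Hx : ext (imps l (J2 b)) = true) by (apply ext_imps; auto).
    assert (Hd : derivable (add T e) (imps l (J2 b))).
    { apply IH. revert Hb. apply derivable_mono. unfold add. intros y [Hy|[<-|Hy]]; auto. }
    by_taut [Imp e (J2 (imps l (J2 b))); Imp (J2 (imps l (J2 b))) (imps l (J2 b))].
    + apply deduction; assumption.
    + apply der_J2_ext, Hx.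
Qed.

Lemma derivable_compact T b : derivable T b ->
  exists l, (forall y, In y l -> T y) /\ derivable (fun y => In y l) b.
Proof.
  assert (Happ : forall l1 l2 a, derivable (fun y => In y l1) a ->
            derivable (fun y => In y (l1 ++ l2)) a /\ derivable (fun y => In y (l2 ++ l1)) a).
  { intros l1 l2 a Ha. split; revert Ha; apply derivable_mono; intros y Hy;
      apply in_or_app; auto. }
  induction 1 as [T a Ha|T a Ha|T a b _ [l1 [H1 D1]] _ [l2 [H2 D2]]
                 |T a b _ [l1 [H1 D1]] _ [l2 [H2 D2]]|T a _ [l [Hl D]]|T a _ [l [Hl D]]|T a Ha].
  - exists [a]. split; [intros y [<-|[]]; exact Ha | apply d_hyp; left; reflexivity].
  - exists []. split; [intros y [] | apply d_ax, Ha].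
  - exists (l1 ++ l2). split; [intros y Hy; apply in_app_or in Hy as [Hy|Hy]; auto|].
    apply d_mp with a; [apply (Happ l1 l2 a D1) | apply (Happ l2 l1 _ D2)].
  - exists (l1 ++ l2). split; [intros y Hy; apply in_app_or in Hy as [Hy|Hy]; auto|].
    apply d_equiv; [apply (Happ l1 l2 _ D1) | apply (Happ l2 l1 _ D2)].
  - exists l. split; [exact Hl | apply d_J2intro, D].
  - exists l. split; [exact Hl | apply d_J2elim, D].
  - exists []. split; [intros y [] | apply d_nec, Ha].
Qed.

Definition consistent (T : form -> Prop) : Prop := ~ derivable T Bot.

Lemma consistent_mono T T' : (forall y, T y -> T' y) -> consistent T' -> consistent T.
Proof. intros HT H HB. apply H. revert HB. apply derivable_mono, HT. Qed.

Lemma consistent_add_not_J2 T a : ~ derivable T a -> consistent (add T (Neg (J2 a))).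
Proof.
  intros Ha HB. apply Ha, derivable_J2_inv.
  by_taut [Imp (Neg (J2 a)) (J2 Bot); Neg (J2 Bot)].
  - apply deduction; [reflexivity | exact HB].
  - apply der_not_J2_Bot.
Qed.

Lemma consistent_add_J2_or_not T p : consistent T ->
  consistent (add T (J2 p)) \/ consistent (add T (Neg (J2 p))).
Proof.
  intros H. apply NNPP. intros Hn. apply not_or_and in Hn as [H1 H2].
  apply NNPP in H1, H2. apply H.
  by_taut [Imp (J2 p) (J2 Bot); Imp (Neg (J2 p)) (J2 Bot); Neg (J2 Bot)].
  - apply deduction; [reflexivity | exact H1].
  - apply deduction; [reflexivity | exact H2].
  - apply der_not_J2_Bot.
Qed.

Definition max_theory (G : form -> Prop) : Prop :=
  (forall a, derivable G a -> G a) /\ ~ G Bot /\ (forall a, G (J2 a) \/ G (Neg (J2 a))).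

Fixpoint enc (a : form) : nat :=
  match a with
  | Var n => to_nat (0, n)
  | Bot => to_nat (1, 0)
  | Top => to_nat (2, 0)
  | Neg b => to_nat (3, enc b)
  | J2 b => to_nat (4, enc b)
  | Box b => to_nat (5, enc b)
  | Or b c => to_nat (6, to_nat (enc b, enc c))
  end.

Lemma to_nat_inj p q : to_nat p = to_nat q -> p = q.
Proof. intros H. rewrite <- (cancel_of_to p), <- (cancel_of_to q), H. reflexivity. Qed.

Lemma enc_inj a b : enc a = enc b -> a = b.
Proof.
  revert b. induction a; intros [] H; cbn [enc] in H; apply to_nat_inj in H;
    try discriminate; try reflexivity; apply (f_equal snd) in H; cbn [snd] in H.
  - subst. reflexivity.
  - f_equal. auto.
  - f_equal. auto.
  - f_equal. auto.
  - apply to_nat_inj in H. injection H as H1 H2. f_equal; auto.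
Qed.

Definition pick_literal (T : form -> Prop) (p : form) : form :=
  if excluded_middle_informative (consistent (add T (J2 p))) then J2 p else Neg (J2 p).

Lemma consistent_add_pick_literal T p :
  consistent T -> consistent (add T (pick_literal T p)).
Proof.
  intros H. unfold pick_literal.
  destruct (excluded_middle_informative _) as [Hc|Hc]; [exact Hc|].
  destruct (consistent_add_J2_or_not T p H); tauto.
Qed.

Fixpoint chain (T : form -> Prop) (n : nat) : form -> Prop :=
  match n with
  | 0 => T
  | S m => fun y => chain T m y \/ exists p, enc p = m /\ y = pick_literal (chain T m) p
  end.

Lemma chain_mono T m n y : m <= n -> chain T m y -> chain T n y.
Proof. induction 1; simpl; auto. Qed.

Lemma chain_consistent T n : consistent T -> consistent (chain T n).
Proof.
  intros H. induction n as [|m IH]; [exact H|].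
  destruct (classic (exists p, enc p = m)) as [[p Hp]|Hn].
  - apply consistent_mono with (add (chain T m) (pick_literal (chain T m) p)).
    + intros y [Hy|[q [Hq ->]]]; [left; exact Hy | right].
      rewrite <- Hp in Hq. apply enc_inj in Hq. subst q. reflexivity.
    + apply consistent_add_pick_literal, IH.
  - apply consistent_mono with (chain T m); [|exact IH].
    intros y [Hy|[q [Hq _]]]; [exact Hy | exfalso; eauto].
Qed.

Lemma chain_finite T l : (forall y, In y l -> exists n, chain T n y) ->
  exists N, forall y, In y l -> chain T N y.
Proof.
  induction l as [|x l IH]; intros Hl; [exists 0; intros y []|].
  destruct IH as [N HN]; [intros y Hy; apply Hl; right; exact Hy|].
  destruct (Hl x (or_introl eq_refl)) as [k Hk].
  exists (max N k). intros y [<-|Hy].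
  - apply chain_mono with k; [lia | exact Hk].
  - apply chain_mono with N; [lia | apply HN, Hy].
Qed.

Lemma lindenbaum T : consistent T -> exists G, max_theory G /\ (forall y, T y -> G y).
Proof.
  intros H.
  set (U := fun y => exists n, chain T n y).
  assert (HU : consistent U).
  { intros HB. apply derivable_compact in HB as [l [Hl Hd]].
    destruct (chain_finite T l Hl) as [N HN].
    apply (chain_consistent T N H). revert Hd. apply derivable_mono, HN. }
  exists (derivable U). split; [split; [|split]|].
  - intros a Ha. revert Ha. apply derivable_cut. trivial.
  - exact HU.
  - intros a. assert (Ha : U (pick_literal (chain T (enc a)) a)).
    { exists (S (enc a)). right. exists a. split; reflexivity. }
    unfold pick_literal in Ha. destruct (excluded_middle_informative _);
      [left | right]; apply d_hyp, Ha.
  - intros y Hy. apply d_hyp. exists 0. exact Hy.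
Qed.

(** * Maximal theories *)

Section MaxTheory.
Variable G : form -> Prop.
Hypothesis HG : max_theory G.

Lemma max_closed a : derivable G a -> G a.
Proof. apply HG. Qed.

Lemma max_provable a : provable a -> G a.
Proof. intros H. apply max_closed, derivable_provable, H. Qed.

Lemma max_not_Bot : ~ G Bot.
Proof. apply HG. Qed.

Lemma max_taut l e : ext_taut (imps l e) -> Forall G l -> G e.
Proof.
  intros Ht Hl. apply max_closed, (derivable_taut _ l e Ht).
  revert Hl. apply Forall_impl. intros a. apply d_hyp.
Qed.

Ltac max_by_taut l := apply (max_taut l); [taut_solve | forall_list].

Lemma max_mp a b : G a -> G (Imp a b) -> G b.
Proof. intros Ha Hab. apply max_closed. apply d_mp with a; apply d_hyp; assumption. Qed.

Lemma max_J2 a : G a <-> G (J2 a).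
Proof.
  split; intros H; apply max_closed.
  - apply derivable_J2, d_hyp, H.
  - apply derivable_J2_inv, d_hyp, H.
Qed.

Lemma max_ext_dec x : ext x = true -> G x \/ G (Neg x).
Proof.
  intros Hx. destruct (proj2 (proj2 HG) x) as [H|H].
  - left. apply max_J2, H.
  - right. apply max_J2. max_by_taut [Or (J2 x) (J0 x); Neg (J2 x)].
    + apply max_closed, der_ext_defined, Hx.
    + exact H.
Qed.

Lemma max_Neg x : ext x = true -> (G (Neg x) <-> ~ G x).
Proof.
  intros Hx. split.
  - intros H1 H2. apply max_not_Bot. max_by_taut [Neg x; x]; assumption.
  - intros H. destruct (max_ext_dec x Hx); tauto.
Qed.

Lemma max_Or x y : ext x = true -> ext y = true -> (G (Or x y) <-> G x \/ G y).
Proof.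
  intros Hx Hy. split.
  - intros H. destruct (max_ext_dec x Hx) as [H1|H1]; [left; exact H1|].
    right. max_by_taut [Or x y; Neg x]; assumption.
  - intros [H|H]; [max_by_taut [x] | max_by_taut [y]]; exact H.
Qed.

Ltac ext_side := simpl; repeat match goal with H : ext _ = true |- _ => rewrite H end;
  reflexivity.

Lemma max_And x y : ext x = true -> ext y = true -> (G (And x y) <-> G x /\ G y).
Proof.
  intros Hx Hy. unfold And.
  rewrite max_Neg, max_Or, max_Neg, max_Neg by ext_side.
  destruct (max_ext_dec x Hx), (max_ext_dec y Hy); rewrite ?max_Neg in * by assumption;
    tauto.
Qed.

Lemma max_Imp x y : ext x = true -> ext y = true -> (G (Imp x y) <-> (G x -> G y)).
Proof.
  intros Hx Hy. unfold Imp. rewrite max_Or, max_Neg by ext_side.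
  destruct (max_ext_dec x Hx) as [H|H]; rewrite ?max_Neg in H by assumption; tauto.
Qed.

Lemma max_Iff x y : ext x = true -> ext y = true -> (G (Iff x y) <-> (G x <-> G y)).
Proof.
  intros Hx Hy. unfold Iff. rewrite max_And, max_Imp, max_Imp by ext_side. tauto.
Qed.

Definition defined (a : form) : Prop := G (J2 a) \/ G (J0 a).

Lemma max_Plus a : G (Plus a) <-> defined a.
Proof.
  unfold Plus, J1, defined, J0. rewrite max_Neg, max_Neg, max_Or by reflexivity.
  destruct (max_ext_dec (J2 a)), (max_ext_dec (J2 (Neg a))); rewrite ?max_Neg in * by reflexivity;
    tauto.
Qed.

Lemma max_Equiv a b :
  G (Equiv a b) <-> ((G (J2 a) <-> G (J2 b)) /\ (G (J0 a) <-> G (J0 b))).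
Proof. unfold Equiv. rewrite max_And, max_Iff, max_Iff by reflexivity. reflexivity. Qed.

Lemma max_J2_J0_excl a : G (J2 a) -> G (J0 a) -> False.
Proof.
  pose proof (max_provable _ (der_J2_J0_excl _ a)) as H.
  rewrite max_Neg, max_And in H by reflexivity. tauto.
Qed.

Lemma max_J0_iff a : G (J0 a) <-> defined a /\ ~ G (J2 a).
Proof. pose proof (max_J2_J0_excl a). unfold defined. tauto. Qed.

Lemma max_J0_Neg a : G (J0 (Neg a)) <-> G (J2 a).
Proof.
  pose proof (max_provable _ (d_ax _ _ (ax_dneg a))) as H.
  rewrite max_Equiv in H. unfold J0 in *. tauto.
Qed.

Lemma max_J0_J2 a : G (J0 (J2 a)) <-> ~ G (J2 a).
Proof.
  pose proof (max_provable _ (d_ax _ _ (ax_J0J2 a))) as H.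
  rewrite max_Iff, max_Neg in H by reflexivity. exact H.
Qed.

Lemma max_J2_Or a b : G (J2 (Or a b)) <->
  (G (J2 a) /\ G (J2 b)) \/ (G (J2 a) /\ G (J0 b)) \/ (G (J0 a) /\ G (J2 b)).
Proof.
  pose proof (max_provable _ (d_ax _ _ (ax_J2or a b))) as H.
  rewrite max_Iff, !max_Or, !max_And in H by reflexivity. tauto.
Qed.

Lemma max_J2_Top : G (J2 Top).
Proof. apply max_provable, der_J2_Top. Qed.

Lemma max_J0_Bot : G (J0 Bot).
Proof.
  pose proof (max_provable _ (d_ax _ _ ax_neg1)) as H.
  rewrite max_Equiv in H. apply H, max_J0_Neg, max_J2_Top.
Qed.

Lemma max_J2_Or_Top x : G (J2 (Or x Top)) <-> defined x.
Proof.
  rewrite max_J2_Or. pose proof max_J2_Top. pose proof (max_J2_J0_excl Top).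
  unfold defined. tauto.
Qed.

(* [defined] is computed through [J2 (_ \/ 1)] and associativity of [\/]. *)
Lemma max_defined_Or_Top b : defined (Or b Top) <-> defined b.
Proof.
  pose proof (max_provable _ (d_ax _ _ (ax_assoc b Top Top))) as H.
  rewrite max_Equiv, max_J2_Or_Top, max_J2_Or in H.
  pose proof (proj2 (max_J2_Or_Top Top) (or_introl max_J2_Top)).
  unfold defined in *. tauto.
Qed.

Lemma max_defined_Or a b : defined (Or a b) <-> defined a /\ defined b.
Proof.
  pose proof (max_provable _ (d_ax _ _ (ax_assoc a b Top))) as H.
  rewrite max_Equiv, max_J2_Or_Top, max_J2_Or, max_J2_Or_Top in H.
  destruct H as [H _].
  assert (HJ0 : ~ G (J0 (Or b Top))).
  { intros H0. apply (max_J2_J0_excl (Or b Top)); [|exact H0].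
    apply max_J2_Or_Top, max_defined_Or_Top. right. exact H0. }
  rewrite H. unfold defined. tauto.
Qed.

Lemma max_J0_Or a b : G (J0 (Or a b)) <-> G (J0 a) /\ G (J0 b).
Proof.
  rewrite max_J0_iff, max_defined_Or, max_J2_Or.
  pose proof (max_J2_J0_excl a). pose proof (max_J2_J0_excl b). unfold defined. tauto.
Qed.

Lemma max_defined_Box a : defined (Box a) <-> defined a.
Proof.
  pose proof (max_provable _ (d_ax _ _ (ax_plusbox a))) as H.
  rewrite max_Iff, !max_Plus in H by reflexivity. exact (iff_sym H).
Qed.

Lemma max_J2_Box a : G (J2 (Box a)) <-> defined a /\ G (Box (J2 a)).
Proof.
  pose proof (max_provable _ (d_ax _ _ (ax_J2box a))) as HJ2.
  pose proof (max_provable _ (d_ax _ _ (ax_J0box a))) as HJ0.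
  assert (Hdneg : G (Imp (Box (J2 a)) (Box (J2 (Neg (Neg a)))))).
  { apply max_closed, der_Box_J2_mono. by_taut [Iff (J2 (Neg (Neg a))) (J2 a)].
    apply der_J2_dneg. }
  rewrite max_Imp in HJ2, Hdneg by reflexivity.
  rewrite max_Imp, max_Neg in HJ0 by reflexivity.
  pose proof (max_defined_Box a). pose proof (max_J2_J0_excl (Box a)).
  unfold defined, J0 in *. tauto.
Qed.

Lemma max_defined_ext e : ext e = true -> defined e.
Proof.
  intros He. pose proof (max_provable _ (der_ext_defined _ e He)) as H.
  rewrite max_Or in H by reflexivity. exact H.
Qed.

Lemma max_Box_ext e : ext e = true -> (G (Box e) <-> G (Box (J2 e))).
Proof.
  intros He. rewrite (max_J2 (Box e)), max_J2_Box.
  pose proof (max_defined_ext e He). tauto.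
Qed.

Lemma max_Box_mp x y : ext x = true -> ext y = true ->
  G (Box (Imp x y)) -> G (Box x) -> G (Box y).
Proof.
  intros Hx Hy. assert (Hxy : ext (Imp x y) = true) by ext_side.
  rewrite (max_Box_ext (Imp x y)), (max_Box_ext x), (max_Box_ext y) by assumption.
  intros Hbxy Hbx.
  assert (Hk : G (Box (J2 (Imp (J2 x) (J2 y))))).
  { apply max_mp with (1 := Hbxy), max_closed, der_Box_J2_mono.
    by_taut [Imp (J2 (Imp x y)) (Imp x y); Imp (J2 x) x; Imp y (J2 y);
             Imp (Imp (J2 x) (J2 y)) (J2 (Imp (J2 x) (J2 y)))];
      auto using der_J2_ext, der_ext_J2. }
  rewrite <- max_Box_ext in Hk by reflexivity.
  apply max_mp with (1 := Hbx), max_mp with (1 := Hk), max_provable, d_ax, ax_K.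
Qed.

Lemma max_Box_imps l d : Forall (fun y => ext y = true /\ G (Box y)) l -> ext d = true ->
  G (Box (imps l d)) -> G (Box d).
Proof.
  intros Hl Hd. induction Hl as [|y l [Hy HBy] Hl IH]; simpl; [trivial|].
  intros H. apply IH, (max_Box_mp y); auto.
  apply ext_imps; [|exact Hd]. revert Hl. apply Forall_impl. intros a []. assumption.
Qed.

End MaxTheory.

Lemma max_existence G a : max_theory G -> ~ G (Box (J2 a)) ->
  exists D, max_theory D /\ (forall x, G (Box (J2 x)) -> D (J2 x)) /\ ~ D (J2 a).
Proof.
  intros HG Hn. set (T := fun y => ext y = true /\ G (Box y)).
  assert (HT : ~ derivable T a).
  { intros Ha. apply derivable_compact in Ha as [l [Hl Hd]].
    assert (Hl' : Forall T l) by (apply Forall_forall, Hl).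
    assert (Hp : provable (imps l (J2 a))).
    { apply deduction_list; [revert Hl'; apply Forall_impl; intros y []; assumption|].
      revert Hd. apply derivable_mono. intros y Hy. right. exact Hy. }
    apply Hn, (max_Box_imps G HG l); [exact Hl' | reflexivity |].
    apply (max_closed G HG), d_nec, Hp. }
  destruct (lindenbaum _ (consistent_add_not_J2 _ _ HT)) as [D [HD HsubD]].
  exists D. split; [exact HD | split].
  - intros x Hx. apply HsubD. left. split; [reflexivity | exact Hx].
  - apply (max_Neg D HD (J2 a)); [reflexivity|]. apply HsubD. right. reflexivity.
Qed.

(** * The canonical model *)

Definition world : Type := {G : form -> Prop | max_theory G}.

Definition acc (x y : world) : Prop :=
  forall a, proj1_sig x (Box (J2 a)) -> proj1_sig y (J2 a).

Definition val (x : world) (a : form) : wk :=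
  if excluded_middle_informative (proj1_sig x (J2 a)) then W1
  else if excluded_middle_informative (proj1_sig x (J0 a)) then W0 else Wh.

Definition holds (G : form -> Prop) (t : wk) (a : form) : Prop :=
  match t with
  | W1 => G (J2 a)
  | W0 => G (J0 a)
  | Wh => ~ defined G a
  end.

Lemma val_spec x t a : val x a = t <-> holds (proj1_sig x) t a.
Proof.
  destruct x as [G HG]. unfold val, holds, defined; simpl.
  pose proof (max_J2_J0_excl G HG a).
  destruct (excluded_middle_informative (G (J2 a))), (excluded_middle_informative (G (J0 a))), t;
    split; intros; first [reflexivity | discriminate | tauto].
Qed.

Lemma val_defined x a : val x a <> Wh <-> defined (proj1_sig x) a.
Proof. rewrite val_spec. simpl. split; [apply NNPP | tauto]. Qed.

Lemma acc_Box_J2 x a :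
  proj1_sig x (Box (J2 a)) <-> forall y, acc x y -> proj1_sig y (J2 a).
Proof.
  split; [intros H y Hxy; apply Hxy, H|].
  destruct x as [G HG]. simpl. intros H. apply NNPP. intros Hn.
  destruct (max_existence G a HG Hn) as [D [HD [HGD HnD]]].
  apply HnD, (H (exist _ D HD)). exact HGD.
Qed.

Lemma val_Bot x : val x Bot = W0.
Proof. apply val_spec. destruct x as [G HG]. exact (max_J0_Bot G HG). Qed.

Lemma val_Top x : val x Top = W1.
Proof. apply val_spec. destruct x as [G HG]. exact (max_J2_Top G HG). Qed.

Lemma val_Neg x a : val x (Neg a) = wneg (val x a).
Proof.
  destruct (val x a) eqn:E; apply val_spec in E; apply val_spec;
    destruct x as [G HG]; simpl in *.
  - exact E.
  - unfold defined in *. rewrite (max_J0_Neg G HG). unfold J0 in *. tauto.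
  - rewrite (max_J0_Neg G HG). exact E.
Qed.

Lemma val_J2 x a : val x (J2 a) = wJ2 (val x a).
Proof.
  destruct (val x a) eqn:E; apply val_spec in E; apply val_spec;
    destruct x as [G HG]; simpl in *; rewrite ?(max_J0_J2 G HG), <- ?(max_J2 G HG (J2 a)).
  - intros H. apply (max_J2_J0_excl G HG a); assumption.
  - unfold defined in E. tauto.
  - exact E.
Qed.

Lemma val_Or x a b : val x (Or a b) = wor (val x a) (val x b).
Proof.
  destruct (val x a) eqn:Ea, (val x b) eqn:Eb; apply val_spec in Ea, Eb; apply val_spec;
    destruct x as [G HG]; simpl in *;
    first [ rewrite (max_defined_Or G HG) | rewrite (max_J2_Or G HG)
          | rewrite (max_J0_Or G HG) ];
    unfold defined in *; tauto.
Qed.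

Lemma val_Box_Wh x a : val x (Box a) = Wh <-> val x a = Wh.
Proof.
  rewrite !val_spec. destruct x as [G HG]. simpl. rewrite (max_defined_Box G HG). reflexivity.
Qed.

Lemma val_Box_W1 x a :
  val x (Box a) = W1 <-> val x a <> Wh /\ forall y, acc x y -> val y a = W1.
Proof.
  rewrite val_spec, val_defined.
  setoid_rewrite val_spec. simpl. rewrite <- acc_Box_J2.
  destruct x as [G HG]. apply (max_J2_Box G HG).
Qed.

Lemma val_Box_W0 x a :
  val x (Box a) = W0 <-> val x a <> Wh /\ exists y, acc x y /\ val y a <> W1.
Proof.
  assert (Hex : (exists y, acc x y /\ val y a <> W1) <-> ~ proj1_sig x (Box (J2 a))).
  { rewrite acc_Box_J2. setoid_rewrite val_spec. simpl. split.
    - intros [y [Hxy Hy]] H. apply Hy, H, Hxy.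
    - intros H. apply not_all_ex_not in H as [y Hy].
      exists y. apply imply_to_and in Hy. exact Hy. }
  rewrite val_spec, val_defined, Hex. destruct x as [G HG]. simpl.
  rewrite (max_J0_iff G HG), (max_J2_Box G HG), (max_defined_Box G HG). tauto.
Qed.

Definition canonical (x0 : world) : BKmodel := {|
  W := world; W_nonempty := inhabits x0; R := acc; v := val;
  v_bot := val_Bot; v_top := val_Top; v_neg := val_Neg; v_or := val_Or; v_J2 := val_J2;
  v_box_h := val_Box_Wh; v_box_1 := val_Box_W1; v_box_0 := val_Box_W0 |}.

Lemma completeness T phi : local_conseq T phi -> derivable T phi.
Proof.
  intros H. apply NNPP. intros Hn.
  destruct (lindenbaum _ (consistent_add_not_J2 _ _ Hn)) as [D [HD HTD]].
  set (x := exist _ D HD : world).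
  assert (Hphi : val x phi = W1).
  { apply (H (canonical x) x). intros g Hg. apply val_spec. simpl.
    apply (max_J2 D HD g), HTD. left. exact Hg. }
  apply val_spec in Hphi. revert Hphi.
  apply (max_Neg D HD (J2 phi)); [reflexivity|]. apply HTD. right. reflexivity.
Qed.

Theorem mainTheorem5 : forall (G : form -> Prop) (phi : form),
  derivable G phi <-> local_conseq G phi.
Proof.
  intros G phi. split.
  - apply soundness.
  - apply completeness.
Qed.
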